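(* Let $L,D\subseteq\Sigma^\omega$ be such that $D$ has trivial right-congruence. Then $\sim_{L,D}$ is a right-congruence on $\Sigma^*$.
   Context: For $L\subseteq\Sigma^\omega$, the canonical right-congruence $\sim_L$ on $\Sigma^*$ is given by $u\sim_L v$ iff for all $\alpha\in\Sigma^\omega$: $u\alpha\in L\iff v\alpha\in L$. $D$ has trivial right-congruence if $\sim_D$ has exactly one equivalence class. For $w,w'\in\Sigma^*$, $w\sim_{L,D}w'$ iff for all $\alpha\in\Sigma^\omega\setminus D$: $w\alpha\in L\iff w'\alpha\in L$. A right-congruence is an equivalence relation $\sim$ on $\Sigma^*$ such that $u\sim v$ implies $u\sigma\sim v\sigma$ for all $\sigma\in\Sigma$. *)

From mathcomp Require Import all_boot.
Set Implicit Arguments. Unset Strict Implicit. Unset Printing Implicit Defensive.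

Definition oword (Sigma : Type) := nat -> Sigma.

Definition oconc (Sigma : Type) (u : seq Sigma) (a : oword Sigma) : oword Sigma :=
  fun n => if n < size u then nth (a 0) u n else a (n - size u).

Definition canon_rc (Sigma : Type) (L : oword Sigma -> Prop) (u v : seq Sigma) : Prop :=
  forall a : oword Sigma, L (oconc u a) <-> L (oconc v a).

(* ~_L has exactly one equivalence class (Sigma^* is nonempty, so: all words related) *)
Definition trivial_rc (Sigma : Type) (D : oword Sigma -> Prop) : Prop :=
  forall u v : seq Sigma, canon_rc D u v.

Definition rel_LD (Sigma : Type) (L D : oword Sigma -> Prop) (w w' : seq Sigma) : Prop :=
  forall a : oword Sigma, ~ D a -> (L (oconc w a) <-> L (oconc w' a)).

Definition right_congruence (Sigma : Type) (R : seq Sigma -> seq Sigma -> Prop) : Prop :=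
  [/\ (forall u, R u u),
      (forall u v, R u v -> R v u),
      (forall u v w, R u v -> R v w -> R u w) &
      (forall u v (s : Sigma), R u v -> R (rcons u s) (rcons v s))].

(* If D has a trivial right-congruence then D is closed under adding and
   removing finite prefixes; in particular s.a avoids D whenever a does.  The
   relation ~_{L,D} is an intersection of equivalences, and appending s to
   both sides is the instance of u ~_{L,D} v at the suffix s.a. *)
From mathcomp Require Import all_boot.
From Stdlib Require Import FunctionalExtensionality.

Set Implicit Arguments.
Unset Strict Implicit.
Unset Printing Implicit Defensive.

Section Concatenation.

Variable Sigma : Type.
Implicit Types (u v : seq Sigma) (a : oword Sigma).

Lemma oconc0 a : oconc [::] a = a.
Proof. by apply: functional_extensionality => n; rewrite /oconc subn0. Qed.

Lemma oconc_cat u v a : oconc (u ++ v) a = oconc u (oconc v a).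
Proof.
apply: functional_extensionality => n; rewrite /oconc size_cat nth_cat.
have [lt_nu | le_un] := ltnP n (size u).
  by rewrite ltn_addr // (set_nth_default (oconc v a 0)).
by rewrite ltn_subLR // subnDA.
Qed.

Lemma oconc_rcons u s a : oconc (rcons u s) a = oconc u (oconc [:: s] a).
Proof. by rewrite -cats1 oconc_cat. Qed.

Lemma trivial_rc_oconc (D : oword Sigma -> Prop) :
  trivial_rc D -> forall u a, D (oconc u a) <-> D a.
Proof. by move=> trD u a; have := trD u [::] a; rewrite oconc0. Qed.

End Concatenation.

Section RelLD.

Variables (Sigma : Type) (L D : oword Sigma -> Prop).

Lemma rel_LD_refl (u : seq Sigma) : rel_LD L D u u.
Proof. by []. Qed.

Lemma rel_LD_sym (u v : seq Sigma) : rel_LD L D u v -> rel_LD L D v u.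
Proof. by move=> Ruv a Da; apply: iff_sym; apply: Ruv. Qed.

Lemma rel_LD_trans (u v w : seq Sigma) :
  rel_LD L D u v -> rel_LD L D v w -> rel_LD L D u w.
Proof. by move=> Ruv Rvw a Da; apply: iff_trans (Ruv a Da) (Rvw a Da). Qed.

Lemma rel_LD_rcons (u v : seq Sigma) (s : Sigma) :
  trivial_rc D -> rel_LD L D u v -> rel_LD L D (rcons u s) (rcons v s).
Proof.
move=> trD Ruv a Da; rewrite !oconc_rcons; apply: Ruv.
by move/(trivial_rc_oconc trD).
Qed.

End RelLD.

Theorem proposition1 (Sigma : finType) (L D : oword Sigma -> Prop) :
  trivial_rc D -> right_congruence (rel_LD L D).
Proof.
move=> trD; split.
- exact: rel_LD_refl.
- exact: rel_LD_sym.
- exact: rel_LD_trans.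
- by move=> u v s; apply: rel_LD_rcons.
Qed.
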